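(* Let $\mathbb L$ be a set of infinite cardinality $\kappa$. Let $d\in\mathbb I$, let $n\ge1$, and for each $t=1,\dots,n$ let $S_t$ be a finite index set and $A^{st}\in\mathbb W$ ($s\in S_t$) sets with $|A^{st}|=\kappa_t$, where $\aleph_0\le\kappa_t<\kappa_u\le\kappa$ whenever $t<u$. Then there exists $i\in\mathbb I$ with $d\subseteq i$ such that $|A^{st}_i|<|A^{ru}_i|$ for all $t<u$, $s\in S_t$, $r\in S_u$.
   Context: A point over $\mathbb L$ is either an element of $\mathbb L$ or a finite tuple $(x_1,\dots,x_n)$, $n\ge1$, of points over $\mathbb L$ ($\mathbb L$ contains no tuples of points); $P$ is the set of all points; $supp(x)=\{x\}$ for $x\in\mathbb L$ and $supp(x_1,\dots,x_n)=\bigcup_k supp(x_k)$. $\mathbb W$ is the family of finitary point sets: $A\subseteq P$ such that $\{a\in A:supp(a)=i\}$ is finite for every finite $i\subseteq\mathbb L$. $\mathbb I=[\mathbb L]^{<\omega}$ is the set of finite subsets of $\mathbb L$, and $A_i=\{a\in A:supp(a)\subseteq i\}$ for $A\in\mathbb W$, $i\in\mathbb I$. *)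

From HB Require Import structures.
From mathcomp Require Import all_boot.
From mathcomp Require Import boolp classical_sets functions cardinality.
Set Implicit Arguments. Unset Strict Implicit. Unset Printing Implicit Defensive.
Local Open Scope classical_set_scope.

(* Points over L: either an element of L (Atom) or a finite tuple
   (x_1,...,x_n), n >= 1, of points, encoded as Tup x_1 [:: x_2; ...; x_n]. *)
Inductive lpoint (L : Type) : Type :=
| Atom : L -> lpoint L
| Tup : lpoint L -> list (lpoint L) -> lpoint L.

Fixpoint supp (L : Type) (x : lpoint L) : set L :=
  match x with
  | Atom a => [set a]
  | Tup x1 xs =>
      supp x1 `|` (fix supps (l : list (lpoint L)) : set L :=
                     match l with
                     | nil => set0
                     | y :: l' => supp y `|` supps l'
                     end) xs
  end.

Definition finitary (L : Type) (A : set (lpoint L)) : Prop :=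
  forall i : set L, finite_set i -> finite_set [set a | A a /\ supp a = i].

Definition restr (L : Type) (A : set (lpoint L)) (i : set L) : set (lpoint L) :=
  [set a | A a /\ supp a `<=` i].

Definition card_lt (T U : Type) (X : set T) (Y : set U) : Prop :=
  (X #<= Y)%card /\ ~ (Y #<= X)%card.

From HB Require Import structures.
From mathcomp Require Import all_boot zify.
From mathcomp Require finmap.
From mathcomp Require Import boolp classical_sets functions cardinality.
From Stdlib Require Import Lia.
Local Open Scope classical_set_scope.
Set Implicit Arguments. Unset Strict Implicit.

(* For u >= 2 let X_(u-1) be the union of the supports of the points of all
   A^{ts} with t < u; then |X_(u-1)| <= kappa_(u-1), so X_(u-1) has at most
   kappa_(u-1) finite subsets, while |A^{ur}| = kappa_u > kappa_(u-1).  Each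
   point has finite support, so some finite j^{ur} is the trace on X_(u-1) of
   the supports of infinitely many points of A^{ur}.  Start from d together
   with all the j^{ur} and go up level by level: if the sets A^{ts}_i of the
   lower levels have at most N elements, add the supports of N + 1 points of
   each A^{ur} with trace j^{ur}.  These supports meet X_(u-1) only inside i,
   so the lower A^{ts}_i do not change.  The cardinal arithmetic rests on
   |Y * Y| = |Y| for infinite Y (Hessenberg), proved with Zorn's lemma. *)

Definition embeds T U (A : set T) (B : set U) :=
  exists2 f : T -> U, set_fun A B f & set_inj A f.

Lemma choice_on T U (A : set T) (R : T -> U -> Prop) (u0 : U) :
  (forall x, A x -> exists y, R x y) -> exists f : T -> U, forall x, A x -> R x (f x).
Proof.
move=> AR; have /choice[f Rf] : forall x, exists y, A x -> R x y.
  move=> x; have [/AR[y Rxy]|nAx] := pselect (A x); first by exists y.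
  by exists u0.
by exists f.
Qed.

Section Embeddings.
Variables (T U V : Type).
Implicit Types (A : set T) (B : set U) (C : set V).

Lemma embeds_card_le A B : embeds A B -> (A #<= B)%card.
Proof. by move=> /injfunPex[f]; exact: inj_card_le. Qed.

Lemma card_le_embeds A B : inhabited U -> (A #<= B)%card -> embeds A B.
Proof.
elim/Ppointed: U B => [U' B [u]|U' B _ /pcard_leP/injfunPex//]; by case: (no u).
Qed.

Lemma embeds_trans A B C : embeds A B -> embeds B C -> embeds A C.
Proof.
move=> [f fAB fi] [g gBC gi]; exists (g \o f) => [x Ax|x y Ax Ay /= gf].
  exact: gBC (fAB x Ax).
by apply: (fi _ _ Ax Ay); apply: gi gf; apply/mem_set/fAB/set_mem.
Qed.

Lemma embeds_sub (A A' : set T) : A `<=` A' -> embeds A A'.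
Proof. by move=> AA'; exists id. Qed.

End Embeddings.

Lemma bigcup_chain2 T (F : set (set T)) p q : total_on F subset ->
  (\bigcup_(X in F) X) p -> (\bigcup_(X in F) X) q -> exists2 X, F X & X p /\ X q.
Proof.
move=> Fch [X FX Xp] [Y FY Yq].
by have [XY|YX] := Fch X Y FX FY; [exists Y => //; split => //; apply: XY
                                  |exists X => //; split => //; apply: YX].
Qed.

Definition partial_inj T U (G : set (T * U)) :=
  (forall p q, G p -> G q -> p.1 = q.1 -> p.2 = q.2) /\
  (forall p q, G p -> G q -> p.2 = q.2 -> p.1 = q.1).

Lemma partial_inj_bigcup T U (F : set (set (T * U))) : total_on F subset ->
  (forall X, F X -> partial_inj X) -> partial_inj (\bigcup_(X in F) X).
Proof.
move=> Fch Finj; split => p q Up Uq;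
  have [X /Finj[Xfun Xinj] [Xp Xq]] := bigcup_chain2 Fch Up Uq; [exact: Xfun|exact: Xinj].
Qed.

Lemma partial_inj_embeds T U (A : set T) (G : set (T * U)) (u0 : U) :
  partial_inj G -> (forall a, A a -> exists b, G (a, b)) ->
  embeds A [set b | exists a, G (a, b)].
Proof.
move=> [_ Ginj] /(choice_on u0)[f Gf]; exists f => [a /Gf Gaf|a a']; first by exists a.
by move=> /set_mem/Gf Ga /set_mem/Gf Ga' faa'; exact: Ginj Ga Ga' faa'.
Qed.

Lemma partial_inj_graph T U (D : set T) (h : T -> U) :
  set_inj D h -> partial_inj [set (x, h x) | x in D].
Proof.
move=> hi; split=> _ _ [x Dx <-] [y Dy <-] /= xy; first by rewrite xy.
by apply: hi xy; apply: mem_set.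
Qed.

Lemma partial_inj_setU T U (G G' : set (T * U)) :
  partial_inj G -> partial_inj G' ->
  (forall p q, G p -> G' q -> p.1 <> q.1 /\ p.2 <> q.2) -> partial_inj (G `|` G').
Proof.
move=> [Gf Gi] [G'f G'i] GG'; split=> p q [Gp|G'p] [Gq|G'q] pq.
- exact: Gf.
- by have [/(_ pq)] := GG' p q Gp G'q.
- by have [/(_ (esym pq))] := GG' q p Gq G'p.
- exact: G'f.
- exact: Gi.
- by have [_ /(_ pq)] := GG' p q Gp G'q.
- by have [_ /(_ (esym pq))] := GG' q p Gq G'p.
- exact: G'i.
Qed.

Lemma embeds_total T U (A : set T) (B : set U) (t0 : T) (u0 : U) :
  embeds A B \/ embeds B A.
Proof.
pose P G := G `<=` A `*` B /\ partial_inj G.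
have [G [[GAB Ginj] Gmax]] : exists G, P G /\ forall G', G `<` G' -> ~ P G'.
  apply: Zorn_bigcup => F FP Fch; split.
    by move=> p [X /FP[+ _]]; apply.
  by apply: partial_inj_bigcup => // X /FP[].
have [domA|] := pselect (forall a, A a -> exists b, G (a, b)).
  left; apply: embeds_trans (partial_inj_embeds u0 Ginj domA) _.
  by apply: embeds_sub => y [x /GAB[]].
move=> /existsNP[a /not_implyP[Aa /forallNP aG]].
have Ginj_swap : partial_inj [set p | G (p.2, p.1)].
  by case: Ginj => Gfun Gi; split => p q; [exact: Gi|exact: Gfun].
have [domB|] := pselect (forall b, B b -> exists a, G (a, b)).
  right; apply: embeds_trans (partial_inj_embeds t0 Ginj_swap domB) _.
  by apply: embeds_sub => x [y /GAB[]].
move=> /existsNP[b /not_implyP[Bb /forallNP Gb]].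
case: (Gmax (G `|` [set (a, b)])).
  split; first exact: subsetUl.
  by move=> /(_ (a, b) (or_intror erefl)) /aG.
split; first by move=> p [/GAB //|->].
apply: partial_inj_setU => //; first by split=> _ _ -> ->.
by move=> [x y] q Gxy ->; split=> /= [xa|yb]; [apply: (aG y)|apply: (Gb x)];
  rewrite -?xa -?yb.
Qed.

Lemma Zorn_bigcup_above T (P : set (set T)) (G0 : set T) : P G0 ->
  (forall F, F `<=` P -> total_on F subset -> P (\bigcup_(X in F) X)) ->
  exists2 G, G0 `<=` G & P G /\ forall G', G `<` G' -> ~ P G'.
Proof.
move=> PG0 Pch.
have [X [PX Xmax]] : exists X, P (G0 `|` X) /\ forall X', X `<` X' -> ~ P (G0 `|` X').
  apply: (Zorn_bigcup (P := fun X => P (G0 `|` X))) => F FP Fch.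
  have [->|/set0P F0] := eqVneq F set0; first by rewrite bigcup_set0 setU0.
  rewrite -bigcupUr // -(bigcup_image F (setU G0) id).
  apply: Pch => [_ [Z FZ <-]|_ _ [Z FZ <-] [Z' FZ' <-]]; first exact: FP.
  by have [ZZ'|Z'Z] := Fch Z Z' FZ FZ'; [left|right]; apply: setUS.
exists (G0 `|` X); [exact: subsetUl|split=> // G' [XG' G'X] PG'].
have G0G' : G0 `<=` G' by apply: subset_trans XG'; exact: subsetUl.
apply: (Xmax G'); last by rewrite setUidr.
split; first by apply: subset_trans XG'; exact: subsetUr.
by move=> G'X'; apply: G'X => x /G'X' Xx; right.
Qed.

Lemma embeds_setX T T' U U' (A : set T) (A' : set T') (B : set U) (B' : set U') :
  embeds A B -> embeds A' B' -> embeds (A `*` A') (B `*` B').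
Proof.
move=> [f fAB fi] [g gAB gi]; exists (fun p => (f p.1, g p.2)).
  by move=> [x x'] [/= Ax Ax']; split; [exact: fAB|exact: gAB].
move=> [x x'] [y y'] /set_mem[/= Ax Ax'] /set_mem[/= Ay Ay'] [fxy gxy].
by congr pair; [apply: (fi _ _ _ _ fxy)|apply: (gi _ _ _ _ gxy)]; exact: mem_set.
Qed.

Lemma embeds_setU_bool T U (A A' : set T) (M : set U) :
  embeds A M -> embeds A' M -> embeds (A `|` A') (M `*` [set: bool]).
Proof.
move=> [f fAM fi] [g gAM gi].
exists (fun x => if `[< A x >] then (f x, true) else (g x, false)).
  move=> x AA'x; case: asboolP => [Ax|nAx]; split => //; first exact: fAM.
  by case: AA'x => // A'x; exact: gAM.
move=> x y /set_mem AA'x /set_mem AA'y.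
case: asboolP => [Ax|nAx]; case: asboolP => [Ay|nAy] // [].
  by apply: fi; apply: mem_set.
case: AA'x => // A'x; case: AA'y => // A'y.
by apply: gi; apply: mem_set.
Qed.

Lemma embeds_square_bool U (M : set U) : embeds [set: nat] M -> embeds (M `*` M) M ->
  embeds ((M `*` [set: bool]) `*` (M `*` [set: bool])) M.
Proof.
move=> natM MM.
have swap : embeds ((M `*` [set: bool]) `*` (M `*` [set: bool]))
                   ((M `*` M) `*` ([set: bool] `*` [set: bool])).
  exists (fun q => ((q.1.1, q.2.1), (q.1.2, q.2.2))).
    by move=> [[a x] [b y]] [[/= Ma _] [/= Mb _]].
  by move=> [[a x] [b y]] [[a' x'] [b' y']] _ _ [-> -> -> ->].
have bool2 : embeds ([set: bool] `*` [set: bool]) M.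
  apply: embeds_trans natM; exists (fun p : bool * bool => p.1 + 2 * p.2)%N => //.
  by move=> [[] []] [[] []].
by apply: embeds_trans swap (embeds_trans (embeds_setX MM bool2) MM).
Qed.

Section Hessenberg.
Variables (C : Type) (Y : set C) (e : nat -> C).
Hypotheses (eY : forall i, Y (e i)) (e_inj : injective e).

Definition pairing_dom (G : set ((C * C) * C)) : set C :=
  [set a | exists c, G ((a, a), c)].

(* The domain of [G] is read off its diagonal; [G] is the graph of an
   injection from the square of its domain into its domain. *)
Record pairing (G : set ((C * C) * C)) : Prop := {
  pairing_sub : pairing_dom G `<=` Y;
  pairing_closed : forall p c, G (p, c) ->
    [/\ pairing_dom G p.1, pairing_dom G p.2 & pairing_dom G c];
  pairing_total : forall a b, pairing_dom G a -> pairing_dom G b ->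
    exists c, G ((a, b), c);
  pairing_partial_inj : partial_inj G }.

Definition nat_pairing : set ((C * C) * C) :=
  [set ((e p.1, e p.2), e (pickle p)) | p in [set: nat * nat]].

Lemma pairing_dom_nat_pairing a : pairing_dom nat_pairing a <-> exists i, a = e i.
Proof.
split=> [[_ [[i j] _ [<- _ _]]]|[i ->]]; first by exists i.
by exists (e (pickle (i, i))), (i, i).
Qed.

Lemma pairing_nat_pairing : pairing nat_pairing.
Proof.
split.
- by move=> a /pairing_dom_nat_pairing[i ->].
- by move=> p c [[i j] _ [<- <-]]; split; apply/pairing_dom_nat_pairing; eexists.
- move=> _ _ /pairing_dom_nat_pairing[i ->] /pairing_dom_nat_pairing[j ->].
  by exists (e (pickle (i, j))), (i, j).
- by split=> _ _ [[i j] _ <-] [[i' j'] _ <-] /=;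
    [case=> /e_inj <- /e_inj <-|move=> /e_inj/(pcan_inj pickleK)[-> ->]].
Qed.

Lemma pairing_dom_bigcup (F : set (set ((C * C) * C))) a :
  pairing_dom (\bigcup_(X in F) X) a <-> exists2 X, F X & pairing_dom X a.
Proof.
by split=> [[c [X FX Xc]]|[X FX [c Xc]]]; [exists X => //; exists c|exists c, X].
Qed.

Lemma pairing_bigcup (F : set (set ((C * C) * C))) :
  F `<=` pairing -> total_on F subset -> pairing (\bigcup_(X in F) X).
Proof.
move=> FP Fch; split.
- by move=> a /pairing_dom_bigcup[X /FP/pairing_sub]; apply.
- move=> p c [X FX /(pairing_closed (FP X FX))[h1 h2 h3]].
  by split; apply/pairing_dom_bigcup; exists X.
- move=> a b /pairing_dom_bigcup[X FX [c Xc]] /pairing_dom_bigcup[X' FX' [c' Xc']].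
  have [Z FZ [Zc Zc']] : exists2 Z, F Z & Z ((a, a), c) /\ Z ((b, b), c').
    by apply: bigcup_chain2 => //; [exists X|exists X'].
  have [d Zd] := pairing_total (FP Z FZ) (ex_intro _ c Zc) (ex_intro _ c' Zc').
  by exists d, Z.
- by apply: partial_inj_bigcup => // X /FP/pairing_partial_inj.
Qed.

Section Extension.
Variables (G : set ((C * C) * C)) (N : set C) (h : C * C -> C).
Local Notation M := (pairing_dom G).
Local Notation D := ((M `|` N) `*` (M `|` N) `\` M `*` M).
Hypotheses (PG : pairing G) (NY : N `<=` Y) (NM : forall a, N a -> ~ M a).
Hypotheses (hDN : set_fun D N h) (h_inj : set_inj D h).

Lemma pairing_dom_extend : pairing_dom (G `|` [set (p, h p) | p in D]) = M `|` N.
Proof.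
apply/seteqP; split=> a.
  move=> [c [Gc|[p [[MNp1 _] _] [pE _]]]]; first by left; exists c.
  by rewrite pE in MNp1.
move=> [[c Gc]|Na]; first by exists c; left.
exists (h (a, a)); right; exists (a, a) => //.
by split; [split; right|case=> /= Ma _; exact: NM Na Ma].
Qed.

Lemma pairing_extend : pairing (G `|` [set (p, h p) | p in D]).
Proof.
have domE := pairing_dom_extend; split; rewrite ?domE.
- by move=> a [/(pairing_sub PG)|/NY].
- move=> p c [/(pairing_closed PG)[Mp1 Mp2 Mc]|[q Dq [<- <-]]]; first by split; left.
  by have [[MNq1 MNq2] _] := Dq; split => //; right; exact: hDN.
- move=> a b MNa MNb; have [[Ma Mb]|nMab] := pselect (M a /\ M b).
    by have [c Gc] := pairing_total PG Ma Mb; exists c; left.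
  by exists (h (a, b)); right; exists (a, b).
- apply: partial_inj_setU; [exact: pairing_partial_inj PG|exact: partial_inj_graph|].
  move=> [p c] q' Gpc [q Dq <-]; have [Mp1 Mp2 Mc] := pairing_closed PG Gpc.
  split=> [/= pq|/= chq]; first by case: Dq => _; apply; rewrite -pq.
  by apply: (NM (hDN Dq)); rewrite -chq.
Qed.

End Extension.

Lemma embeds_setXX_seq : embeds (Y `*` Y) Y.
Proof.
have [G natG [PG Gmax]] := Zorn_bigcup_above pairing_nat_pairing pairing_bigcup.
set M := pairing_dom G.
have Me i : M (e i) by exists (e (pickle (i, i))); apply: natG; exists (i, i).
have natM : embeds [set: nat] M by exists e => [i _|i j _ _ /e_inj].
have MM : embeds (M `*` M) M.
  have MMdom p : (M `*` M) p -> exists c, G (p, c).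
    by case: p => a b [/= Ma Mb]; exact: (pairing_total PG Ma Mb).
  apply: embeds_trans (partial_inj_embeds (e 0) (pairing_partial_inj PG) MMdom) _.
  by apply: embeds_sub => c [p /(pairing_closed PG)[]].
have square (Z : set C) : embeds Z (M `*` [set: bool]) -> embeds (Z `*` Z) M.
  by move=> ZM; apply: embeds_trans (embeds_setX ZM ZM) (embeds_square_bool natM MM).
(* Either [Y] is at most two copies of [M], or a copy [N] of [M] sits in
   [Y `\` M] and the pairing extends to [M `|` N], against maximality. *)
have [YM|[g gM gi]] := embeds_total (Y `\` M) M (e 0) (e 0).
  have YMb : embeds Y (M `*` [set: bool]).
    apply: (embeds_trans (B := M `|` (Y `\` M))).
      by apply: embeds_sub => y Yy; have [My|nMy] := pselect (M y); [left|right].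
    exact: embeds_setU_bool (embeds_sub (@subset_refl _ M)) YM.
  exact: (embeds_trans (square Y YMb) (embeds_sub (pairing_sub PG))).
exfalso; set N := g @` M.
have NY a : N a -> Y a by move=> [b Mb <-]; have [] := gM b Mb.
have NnM a : N a -> ~ M a by move=> [b Mb <-]; have [] := gM b Mb.
have NM : embeds N M.
  by apply: card_le_embeds (inhabits (e 0)) _; exact: card_image_le.
have [h hD hi] : embeds ((M `|` N) `*` (M `|` N) `\` M `*` M) N.
  apply: (embeds_trans (B := M)); last by exists g => // a Ma; exists a.
  apply: (embeds_trans (B := (M `|` N) `*` (M `|` N))).
    exact: embeds_sub (@subDsetl _ _ _).
  by apply: square; apply: embeds_setU_bool NM; exact: embeds_sub.
move: (pairing_extend PG NY NnM hD hi) (pairing_dom_extend h NnM).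
set G' := G `|` _ => PG' domG'; apply: (Gmax G') => //; split; first exact: subsetUl.
move=> G'G; have Ng : N (g (e 0)) by exists (e 0).
have [c /G'G Gc] : pairing_dom G' (g (e 0)) by rewrite domG'; right.
by apply: (NnM _ Ng); exists c.
Qed.

End Hessenberg.

Local Open Scope card_scope.

Lemma embeds_setXX C (Y : set C) : embeds [set: nat] Y -> embeds (Y `*` Y) Y.
Proof.
move=> [e eY ei]; apply: (embeds_setXX_seq (e := e)) => [i|i j]; first exact: eY.
by apply: ei; rewrite inE.
Qed.

Lemma infinite_inhabited T (A : set T) : infinite_set A -> inhabited T.
Proof. by move=> /infinite_setN0[x _]; exact: inhabits x. Qed.

Lemma card_le_setXX C (Y : set C) : infinite_set Y -> Y `*` Y #<= Y.
Proof.
move=> Yinf; apply/embeds_card_le/embeds_setXX.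
have /infiniteP natY := Yinf; exact: card_le_embeds (infinite_inhabited Yinf) natY.
Qed.

Lemma card_le_bigcup I T C (D : set I) (F : I -> set T) (Y : set C) :
  infinite_set Y -> D #<= Y -> (forall i, D i -> F i #<= Y) ->
  \bigcup_(i in D) F i #<= Y.
Proof.
move=> Yinf DY FY; have [y0 _] := infinite_setN0 Yinf.
have [->|/set0P[x0 [i0 Di0 _]]] := eqVneq (\bigcup_(i in D) F i) set0.
  exact: card_ge0.
have [d dY di] := card_le_embeds (inhabits y0) DY.
have [idx idxP] : exists idx : T -> I, forall x, (\bigcup_(i in D) F i) x ->
    D (idx x) /\ F (idx x) x.
  by apply: (choice_on (R := fun x i => D i /\ F i x) i0) => x [i Di Fix]; exists i.
have [f fP] : exists f : I -> T -> C, forall i, D i ->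
    set_fun (F i) Y (f i) /\ set_inj (F i) (f i).
  apply: (choice_on (R := fun i f => set_fun (F i) Y f /\ set_inj (F i) f) (fun=> y0)).
  by move=> i /FY /(card_le_embeds (inhabits y0))[f ? ?]; exists f.
apply: card_le_trans (card_le_setXX Yinf); apply: embeds_card_le.
exists (fun x => (d (idx x), f (idx x) x)).
  by move=> x /idxP[Di Fx]; split; [exact: dY|exact: (fP _ Di).1].
move=> x y /set_mem/idxP[Dx Fx] /set_mem/idxP[Dy Fy] [/di dxy fxy].
have idxy : idx x = idx y by apply: dxy; apply: mem_set.
by rewrite idxy in Fx fxy; apply: (fP _ Dy).2 fxy; apply: mem_set.
Qed.

Lemma finite_card_le_infinite T C (A : set T) (Y : set C) :
  finite_set A -> infinite_set Y -> A #<= Y.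
Proof.
move=> /finite_set_leP[k Ak] /infiniteP natY.
by apply: card_le_trans Ak (card_le_trans (subset_card_le _) natY).
Qed.

Lemma card_le_finite_subsets T C (X : set T) (Y : set C) :
  infinite_set Y -> X #<= Y -> [set j | finite_set j /\ j `<=` X] #<= Y.
Proof.
move=> Yinf XY; have inhC := infinite_inhabited Yinf.
have -> : [set j | finite_set j /\ j `<=` X] =
          \bigcup_(k in [set: nat]) [set j | j `<=` X /\ j #= `I_k].
  apply/seteqP; split=> [j [/finite_setP[k jk] jX]|j [k _ [jX jk]]]; first by exists k.
  by split=> //; apply/finite_setP; exists k.
apply: card_le_bigcup => //; first exact/infiniteP.
elim=> [_|k IHk _].
  apply: finite_card_le_infinite Yinf; apply: sub_finite_set (finite_set1 set0).
  by move=> j [_]; rewrite II0 card_eq0 => /eqP.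
apply: (card_le_trans (B := X `*` [set j | j `<=` X /\ j #= `I_k])).
  apply: card_le_trans (card_image_le (fun u => u.1 |` u.2) _).
  apply: subset_card_le => j [jX] /eq_cardSP[x jx jxk].
  exists (x, j `\ x) => /=; last by apply: setDUK => _ ->.
  by do !split=> //; [exact: jX|apply: subset_trans jX; apply: subDsetl].
apply: card_le_trans (card_le_setXX Yinf); apply: embeds_card_le.
by apply: embeds_setX; apply: card_le_embeds inhC _; [exact: XY|exact: IHk].
Qed.

Section FinitePowerset.
Import finmap.

Lemma finite_powerset T (i : set T) : finite_set i -> finite_set [set j | j `<=` i].
Proof.
elim/Pchoice: T i => T i /finite_fsetP[X ->].
apply: sub_finite_set (finite_image (fun Z => [set` Z]) (finite_fset (fpowerset X))).
move=> j jX; have /finite_fsetP[Z jZ] := sub_finite_set jX (finite_fset X).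
exists Z; last by rewrite jZ.
by rewrite /= fpowersetE; apply/fsubsetP => x xZ; apply: jX; rewrite jZ.
Qed.

End FinitePowerset.

Lemma finite_supp L (x : lpoint L) : finite_set (supp x).
Proof.
move: x; fix IH 1 => -[a|x xs] /=; first exact: finite_set1.
rewrite finite_setU; split; first exact: IH.
move: xs; fix IHs 1 => -[|y xs] /=; first exact: finite_set0.
by rewrite finite_setU; split; [exact: IH|exact: IHs].
Qed.

Lemma finite_restr L (A : set (lpoint L)) (i : set L) :
  finitary A -> finite_set i -> finite_set (restr A i).
Proof.
move=> Afin ifin.
apply: (sub_finite_set (B := \bigcup_(j in [set j | j `<=` i]) [set a | A a /\ supp a = j])).
  by move=> a [Aa ai]; exists (supp a).
apply: bigcup_finite; first exact: finite_powerset.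
by move=> j ji; apply: Afin; exact: sub_finite_set ji ifin.
Qed.

Lemma restr_setU L (A : set (lpoint L)) (i E : set L) :
  (forall a, A a -> supp a `&` E `<=` i) -> restr A (i `|` E) = restr A i.
Proof.
move=> AE; apply/seteqP; split=> a [Aa ai]; split=> // x ax; last by left; exact: ai.
by case: (ai x ax) => // Ex; apply: (AE a Aa).
Qed.

Lemma infinite_set_sub_II T (B : set T) (N : nat) :
  infinite_set B -> exists2 F, finite_set F & F `<=` B /\ `I_N #<= F.
Proof.
move=> Binf; have /infiniteP natB := Binf.
have [f fB fi] := card_le_embeds (infinite_inhabited Binf) natB.
exists (f @` `I_N); first exact/finite_image/finite_II.
split; first by move=> _ [k _ <-]; exact: fB.
apply: embeds_card_le; exists f => [k Nk|k k' _ _]; first by exists k.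
by apply: fi; rewrite inE.
Qed.

Lemma card_lt_II T U (X : set T) (Y : set U) (N : nat) :
  X #<= `I_N -> `I_N.+1 #<= Y -> card_lt X Y.
Proof.
move=> XN NY; split.
  by apply: card_le_trans XN (card_le_trans (subset_card_le _) NY) => k /ltnW.
by move=> YX; have := card_le_trans NY (card_le_trans YX XN); rewrite card_le_II ltnn.
Qed.

Section Levels.
Variables (L C : Type) (K : nat -> set C) (n : nat) (m : nat -> nat).
Variable A : nat -> nat -> set (lpoint L).
Hypotheses (hW : forall t s, (1 <= t <= n)%N -> (s < m t)%N -> finitary (A t s))
  (hA : forall t s, (1 <= t <= n)%N -> (s < m t)%N -> A t s #= K t)
  (hK0 : forall t, (1 <= t <= n)%N -> infinite_set (K t))
  (hKlt : forall t u, (1 <= t)%N -> (t < u)%N -> (u <= n)%N -> card_lt (K t) (K u)).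

Definition levels v := [set p : nat * nat | (1 <= p.1 <= v)%N /\ (p.2 < m p.1)%N].

Definition support_upto v := \bigcup_(p in levels v) \bigcup_(a in A p.1 p.2) supp a.

Definition fiber u r (j : set L) :=
  [set b | A u r b /\ supp b `&` support_upto u.-1 = j].

Lemma finite_levels v : finite_set (levels v).
Proof.
have XRfin : finite_set (`I_v.+1 `*`` (fun t => `I_(m t))).
  by apply: finite_setXR (finite_II _) _ => t _; exact: finite_II.
by apply: sub_finite_set XRfin => -[t s] [/andP[_ tv] st].
Qed.

Lemma card_le_K t u : (1 <= t)%N -> (t <= u)%N -> (u <= n)%N -> K t #<= K u.
Proof.
move=> t1; rewrite leq_eqVlt => /orP[/eqP <-|tu] un //.
by case: (hKlt t1 tu un).
Qed.

Lemma card_support_upto v : (1 <= v <= n)%N -> support_upto v #<= K v.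
Proof.
move=> vn; have Kinf := hK0 vn.
apply: (card_le_bigcup Kinf (finite_card_le_infinite (finite_levels v) Kinf)).
move=> [t s] /= [/andP[t1 tv] st].
have tn : (1 <= t <= n)%N by rewrite t1 (leq_trans tv) //; case/andP: vn.
apply: (card_le_bigcup Kinf _ (fun a _ => finite_card_le_infinite (finite_supp a) Kinf)).
have /card_eqPle[AK _] := hA tn st.
by apply: card_le_trans AK (card_le_K t1 tv _); case/andP: vn.
Qed.

Lemma infinite_fiber u r : (2 <= u <= n)%N -> (r < m u)%N ->
  exists j, finite_set j /\ infinite_set (fiber u r j).
Proof.
move=> un ru; apply: contrapT => /forallNP nofib.
have fibfin j : finite_set j -> finite_set (fiber u r j).
  by move=> jfin; apply: contrapT => fibinf; apply: (nofib j).
have vn : (1 <= u.-1 <= n)%N by case/andP: un => u2 un; apply/andP; split; lia.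
have Kinf := hK0 vn.
have AK : A u r #<= K u.-1.
  apply: (card_le_trans (B := \bigcup_(j in [set j | finite_set j /\
      j `<=` support_upto u.-1]) fiber u r j)).
    apply: subset_card_le => b Ab; exists (supp b `&` support_upto u.-1) => //.
    by split; [exact: finite_setIl (finite_supp b)|exact: subIsetr].
  apply: (card_le_bigcup Kinf (card_le_finite_subsets Kinf (card_support_upto vn))).
  by move=> j [jfin _]; exact: finite_card_le_infinite (fibfin j jfin) Kinf.
case/andP: un => u2 un.
have un1 : (1 <= u <= n)%N by rewrite un andbT ltnW.
have /card_eqPle[_ KA] := hA un1 ru.
have [v1 vu] : (1 <= u.-1)%N /\ (u.-1 < u)%N by split; lia.
by case: (hKlt v1 vu un) => _; apply; exact: card_le_trans KA AK.
Qed.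

Lemma extend_level u (J : nat -> set L) (i : set L) (N : nat) :
  (2 <= u <= n)%N -> (forall r, (r < m u)%N -> infinite_set (fiber u r (J r))) ->
  (forall r, (r < m u)%N -> J r `<=` i) ->
  exists2 E, finite_set E &
    (forall t s, (1 <= t < u)%N -> (s < m t)%N -> restr (A t s) (i `|` E) = restr (A t s) i) /\
    (forall r, (r < m u)%N -> `I_N #<= restr (A u r) (i `|` E)).
Proof.
move=> un Jinf Ji.
have [F FP] : exists F : nat -> set (lpoint L), forall r, (r < m u)%N ->
    [/\ finite_set (F r), F r `<=` fiber u r (J r) & `I_N #<= F r].
  apply: (choice_on (R := fun r F => [/\ finite_set F, F `<=` fiber u r (J r) & `I_N #<= F])
    set0) => r ru.
  by have [Fr Frfin [Frfib NFr]] := infinite_set_sub_II N (Jinf r ru); exists Fr.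
exists (\bigcup_(r in `I_(m u)) \bigcup_(b in F r) supp b).
  apply: bigcup_finite (finite_II _) _ => r ru.
  by apply: bigcup_finite => [|b _]; [case: (FP r ru)|exact: finite_supp].
split=> [t s tu st|r ru].
  apply: restr_setU => a Aa x [ax [r ru [b Fb bx]]].
  have [_ /(_ b Fb)[_ bJ] _] := FP r ru.
  apply: (Ji r ru); rewrite -bJ; split=> //; exists (t, s) => /=; last by exists a.
  by case/andP: tu => t1 tu; split=> //=; rewrite t1 -ltnS (ltn_predK tu).
have [_ Ffib NF] := FP r ru; apply: card_le_trans NF (subset_card_le _) => b Fb.
by have [Ab _] := Ffib b Fb; split=> // x bx; right; exists r => //; exists b.
Qed.

Definition separated k (i : set L) := forall t u s r, (1 <= t)%N -> (t < u)%N ->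
  (u <= k)%N -> (s < m t)%N -> (r < m u)%N -> card_lt (restr (A t s) i) (restr (A u r) i).

Lemma restr_levels_bound k (i : set L) : (k <= n)%N -> finite_set i ->
  exists N, forall t s, (1 <= t <= k)%N -> (s < m t)%N -> restr (A t s) i #<= `I_N.
Proof.
move=> kn ifin; have : finite_set (\bigcup_(p in levels k) restr (A p.1 p.2) i).
  apply: bigcup_finite (finite_levels k) _ => -[t s] [/= /andP[t1 tk] st].
  by apply: finite_restr ifin; apply: hW st; rewrite t1 (leq_trans tk kn).
move=> /finite_set_leP[N UN]; exists N => t s tk st.
by apply: card_le_trans UN; apply: subset_card_le => a ra; exists (t, s).
Qed.

Lemma exists_separated (J : nat * nat -> set L) (i0 : set L) : finite_set i0 ->
  (forall u r, (2 <= u <= n)%N -> (r < m u)%N ->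
    infinite_set (fiber u r (J (u, r))) /\ J (u, r) `<=` i0) ->
  forall k, (k <= n)%N -> exists i, [/\ finite_set i, i0 `<=` i & separated k i].
Proof.
move=> i0fin JP; elim=> [_|k IHk kn]; first by exists i0; split=> // t u s r; lia.
have [i [ifin i0i ilt]] := IHk (ltnW kn).
have [k0|k_gt0] := posnP k; first by exists i; split=> // t u s r; lia.
have [N NP] := restr_levels_bound (ltnW kn) ifin.
have k1n : (2 <= k.+1 <= n)%N by rewrite kn ltnS k_gt0.
have [r ru|r ru|E Efin [Epres Ebig]] :=
  extend_level (J := fun r => J (k.+1, r)) (i := i) N.+1 k1n.
- by have [] := JP _ _ k1n ru.
- by have [_ /subset_trans] := JP _ _ k1n ru; apply.
exists (i `|` E); split=> [|x /i0i ix|t u s r t1 tu un st ru]; first by rewrite finite_setU.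
  by left.
rewrite Epres //; last by apply/andP; split; lia.
have [uk|ku] := leqP u k.
  by rewrite Epres //; [exact: ilt|apply/andP; split; lia].
have tk : (1 <= t <= k)%N by apply/andP; split; lia.
have uE : u = k.+1 by lia.
by rewrite uE in ru *; exact: card_lt_II (NP t s tk st) (Ebig r ru).
Qed.

Lemma level_construction (d : set L) : finite_set d ->
  exists i, [/\ finite_set i, d `<=` i & separated n i].
Proof.
move=> dfin; pose upper := [set p : nat * nat | (2 <= p.1 <= n)%N /\ (p.2 < m p.1)%N].
have [J JP] : exists J : nat * nat -> set L, forall p, upper p ->
    finite_set (J p) /\ infinite_set (fiber p.1 p.2 (J p)).
  apply: (choice_on (R := fun p j => finite_set j /\ infinite_set (fiber p.1 p.2 j)) set0).
  by move=> [u r] [/= un ru]; exact: infinite_fiber.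
set i0 := d `|` \bigcup_(p in upper) J p.
have i0fin : finite_set i0.
  rewrite finite_setU; split=> //; apply: bigcup_finite => [|p /JP[] //].
  apply: (sub_finite_set _ (finite_levels n)) => -[u r] [/= /andP[u2 un] ru].
  by split=> //=; rewrite un (leq_trans _ u2).
have Ji0 u r : (2 <= u <= n)%N -> (r < m u)%N ->
    infinite_set (fiber u r (J (u, r))) /\ J (u, r) `<=` i0.
  move=> un ru; have [_ Jinf] := JP (u, r) (conj un ru).
  by split=> // x Jx; right; exists (u, r).
have [i [ifin di ilt]] := exists_separated i0fin Ji0 (leqnn n).
by exists i; split=> //; apply: subset_trans di; exact: subsetUl.
Qed.

End Levels.

Unset Implicit Arguments. Set Strict Implicit.

Theorem mainTheorem8
  (L : Type) (hL : infinite_set [set: L])            (* kappa = |L| infinite *)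
  (C : Type) (K : nat -> set C)                       (* kappa_t = |K t| *)
  (d : set L) (hd : finite_set d)                     (* d in I *)
  (n : nat) (hn : (1 <= n)%N)
  (m : nat -> nat)                                    (* S_t = {0,...,m t - 1} *)
  (A : nat -> nat -> set (lpoint L))                   (* A^{st} = A t s *)
  (hW : forall t s, (1 <= t <= n)%N -> (s < m t)%N -> finitary (A t s))
  (hA : forall t s, (1 <= t <= n)%N -> (s < m t)%N -> (A t s #= K t)%card)
  (hK0 : forall t, (1 <= t <= n)%N -> infinite_set (K t))
  (hKlt : forall t u, (1 <= t)%N -> (t < u)%N -> (u <= n)%N -> card_lt (K t) (K u))
  (hKL : forall u, (1 <= u <= n)%N -> (K u #<= [set: L])%card) :
  exists i : set L, finite_set i /\ d `<=` i /\
    forall t u s r, (1 <= t)%N -> (t < u)%N -> (u <= n)%N ->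
      (s < m t)%N -> (r < m u)%N ->
      card_lt (restr (A t s) i) (restr (A u r) i).
Proof.
have [i [ifin di ilt]] := level_construction hW hA hK0 hKlt hd.
by exists i.
Qed.
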